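(* Let $n\ge2$, $a\ge\sqrt{n-1}$, $f(x)=a|x^{(1)}|+\sum_{i=2}^n x^{(i)}$ on $\mathbb{R}^n$, and $0<c_1<c_2<1$; let $\tau=c_1+\frac{(n-1)(c_1-1)}{a^2}$. Let $x_k\in\mathbb{R}^n$ with $x_k^{(1)}\ne0$, $d_k=-\nabla f(x_k)$, and $t_k\in\mathbb{R}$. Suppose $W(t_k)$ holds. Then $A(t_k)$ holds if and only if $$(1+\tau)\frac{at_k}{2}\le |x_k^{(1)}|.$$
   Context: $x^{(i)}$ is the $i$-th coordinate. The Armijo condition is $A(t)$: $f(x_k+td_k)\le f(x_k)+c_1t\nabla f(x_k)^Td_k$; the Wolfe condition is $W(t)$: $f$ is differentiable at $x_k+td_k$ and $\nabla f(x_k+td_k)^Td_k\ge c_2\nabla f(x_k)^Td_k$. *)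

From HB Require Import structures.
From mathcomp Require Import all_boot all_order all_algebra.
From mathcomp Require Import all_classical all_reals all_analysis.
Set Implicit Arguments. Unset Strict Implicit. Unset Printing Implicit Defensive.
Import Order.TTheory GRing.Theory Num.Theory.
Import numFieldNormedType.Exports.
Local Open Scope ring_scope.

Section Defs.
Variables (R : realType) (n : nat).

(** x^{(1)}: the first coordinate (index 0) of x : 'rV[R]_n (n >= 1). *)
Definition coord1 (x : 'rV[R]_n) : R := \sum_(i < n | val i == 0%N) x 0 i.

Definition fpaper (a : R) (x : 'rV[R]_n) : R :=
  a * `|coord1 x| + \sum_(i < n | val i != 0%N) x 0 i.

Definition grad (f : 'rV[R]_n -> R) (x : 'rV[R]_n) : 'rV[R]_n :=
  \row_(i < n) ('d f x) (delta_mx 0 i).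

Definition dot (u v : 'rV[R]_n) : R := \sum_(i < n) u 0 i * v 0 i.

Definition armijo (f : 'rV[R]_n -> R) (c1 : R) (x d : 'rV[R]_n) (t : R) : Prop :=
  f (x + t *: d) <= f x + c1 * t * dot (grad f x) d.

Definition wolfe (f : 'rV[R]_n -> R) (c2 : R) (x d : 'rV[R]_n) (t : R) : Prop :=
  differentiable f (x + t *: d) /\
  dot (grad f (x + t *: d)) d >= c2 * dot (grad f x) d.
End Defs.

From HB Require Import structures.
From mathcomp Require Import all_boot all_order all_algebra.
From mathcomp Require Import all_classical all_reals all_analysis.
From mathcomp Require Import lra ring.
Set Implicit Arguments. Unset Strict Implicit. Unset Printing Implicit Defensive.
Import Order.TTheory GRing.Theory Num.Theory.
Import numFieldNormedType.Exports.
Local Open Scope ring_scope.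

(* Off the hyperplane x^(1) = 0, f is affine near x with gradient
   (a s, 1, ..., 1), s = sg x^(1), while on that hyperplane f is not
   differentiable (its difference quotient along e_1 is a sg h).  Hence W(t)
   forces y = x - t grad f(x) off the hyperplane, and the curvature condition
   reads a^2 sg(y^(1)) s + (n-1) <= c2 (a^2 + n - 1) < a^2 + n - 1: the step
   crosses the kink, so |y^(1)| = t a - |x^(1)|.  With this, A(t) becomes a
   linear inequality in t, equivalent to (1 + tau) a t / 2 <= |x^(1)|. *)

Lemma normr_sg_close (R : realDomainType) (u v : R) :
  `|v - u| < `|v| -> `|u| = Num.sg v * u.
Proof.
have [v0|v0|->] := ltrgtP v 0; last by rewrite normr0 ltNge normr_ge0.
- rewrite ltr0_sg // (ltr0_norm v0) ltr_norml => /andP[lo hi].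
  by rewrite ltr0_norm ?mulN1r //; lra.
- rewrite gtr0_sg // (gtr0_norm v0) ltr_norml => /andP[lo hi].
  by rewrite gtr0_norm ?mul1r //; lra.
Qed.

Lemma sgr_mul_self (R : realDomainType) (x : R) :
  x != 0 -> Num.sg x * Num.sg x = 1.
Proof. by move=> x0; rewrite -expr2 sqr_sg x0. Qed.

Lemma cvg_scaled_sgr0 (R : realFieldType) (a : R) :
  cvg (a * Num.sg h @[h --> 0^'])%classic -> a = 0.
Proof.
move=> /cvg_ex[l /= asg_l].
have at_right : (a * Num.sg h @[h --> 0^'+] --> a)%classic.
  by apply: cvg_near_cst; near=> h;
    rewrite gtr0_sg ?mulr1 //; near: h; exact: nbhs_right_gt.
have at_left : (a * Num.sg h @[h --> 0^'-] --> - a)%classic.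
  by apply: cvg_near_cst; near=> h;
    rewrite ltr0_sg ?mulrN1 //; near: h; exact: nbhs_left_lt.
have la : l = a :=
  cvg_unique (@norm_hausdorff _ R^o) (cvg_dnbhs_at_right asg_l) at_right.
have lNa : l = - a :=
  cvg_unique (@norm_hausdorff _ R^o) (cvg_dnbhs_at_left asg_l) at_left.
by apply/eqP; rewrite -eqNr -lNa la.
Unshelve. all: by end_near.
Qed.

Lemma armijo_threshold (R : realFieldType) (a c1 N t X : R) : 0 < a ->
  (a * (t * a - X) - t * N <= a * X - c1 * t * (a ^+ 2 + N)) =
  ((1 + (c1 + N * (c1 - 1) / a ^+ 2)) * (a * t / 2) <= X).
Proof.
move=> a0; rewrite -subr_ge0 -[RHS]subr_ge0.
have -> : X - (1 + (c1 + N * (c1 - 1) / a ^+ 2)) * (a * t / 2) =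
    (a * X - c1 * t * (a ^+ 2 + N) - (a * (t * a - X) - t * N)) / (2 * a).
  by field; rewrite lt0r_neq0.
by rewrite pmulr_lge0 // invr_gt0 mulr_gt0.
Qed.

Section RowFunctionals.
Variables (R : realType) (n : nat).
Implicit Types (w x : 'rV[R]_n).

Definition tailsum x : R := \sum_(i < n | val i != 0%N) x 0 i.

Lemma rowsum_is_linear (P : pred 'I_n) :
  linear (fun x : 'rV[R]_n => \sum_(i < n | P i) x 0 i).
Proof.
move=> k x y; rewrite scaler_sumr -big_split /=.
by apply: eq_bigr => i _; rewrite !mxE.
Qed.

HB.instance Definition _ := GRing.isLinear.Build R 'rV[R]_n R _ (@coord1 R n)
  (rowsum_is_linear _).
HB.instance Definition _ := GRing.isLinear.Build R 'rV[R]_n R _ tailsum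
  (rowsum_is_linear _).

Lemma dot_is_linear w : linear (dot w).
Proof.
move=> k x y; rewrite /dot scaler_sumr -big_split /=.
by apply: eq_bigr => i _; rewrite !mxE mulrDr mulrCA.
Qed.

HB.instance Definition _ w := GRing.isLinear.Build R 'rV[R]_n R _ (dot w)
  (dot_is_linear w).

Lemma dot_continuous w : continuous (dot w).
Proof.
apply: (continuous_big add_continuous) => i _ x.
apply: (@continuousM R _ (fun=> w 0 i) (fun v : 'rV[R]_n => v 0 i)).
  exact: cst_continuous.
exact: coord_continuous.
Qed.

Lemma dot_delta w i : dot w (delta_mx 0 i) = w 0 i.
Proof.
rewrite /dot (bigD1 i) //= big1 ?addr0 => [|j ji].
  by rewrite mxE !eqxx mulr1.
by rewrite mxE eqxx (negbTE ji) mulr0.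
Qed.

Lemma grad_near_affine (f : 'rV[R]_n -> R) w (c : R) y :
  (\forall z \near y, f z = dot w z + c) -> grad f y = w.
Proof.
move=> /nbhs0P fE.
have fy : f y = dot w y + c by have := nbhs_singleton fE; rewrite addr0.
have dfE : 'd f y = dot w :> (_ -> _).
  apply: diff_unique; first exact: dot_continuous.
  apply/eqaddoP => e e0; near=> h => /=.
  have -> : (f \o +%R^~ y - (cst (f y) + dot w)) h = 0.
    rewrite -[LHS]/(f (h + y) - (f y + dot w h)) [h + y]addrC (near fE h) //.
    by rewrite fy linearD /=; ring.
  by rewrite normr0 mulr_ge0 // ltW.
by apply/rowP => i; rewrite mxE dfE dot_delta.
Unshelve. all: by end_near.
Qed.

End RowFunctionals.

Section Fpaper.
Variables (R : realType) (n : nat) (a : R).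
Implicit Types (x y : 'rV[R]_n.+1) (s t : R).

Lemma coord1E x : coord1 x = x 0 ord0.
Proof. by rewrite /coord1 (big_pred1 ord0). Qed.

Lemma tailsumE x : tailsum x = \sum_(i < n) x 0 (lift ord0 i).
Proof. by rewrite /tailsum big_mkcond big_ord_recl /= add0r. Qed.

Lemma fpaperE x : fpaper a x = a * `|coord1 x| + tailsum x.
Proof. by []. Qed.

Definition fpaper_grad s : 'rV[R]_n.+1 :=
  \row_i (if i == ord0 then a * s else 1).

Lemma coord1_fpaper_grad s : coord1 (fpaper_grad s) = a * s.
Proof. by rewrite coord1E mxE. Qed.

Lemma tailsum_fpaper_grad s : tailsum (fpaper_grad s) = n%:R.
Proof.
rewrite tailsumE (eq_bigr (fun=> 1)) ?sumr_const ?card_ord // => i _.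
by rewrite mxE.
Qed.

Lemma dot_fpaper_grad s x :
  dot (fpaper_grad s) x = a * s * coord1 x + tailsum x.
Proof.
rewrite /dot big_ord_recl coord1E tailsumE mxE; congr (_ + _).
by apply: eq_bigr => i _; rewrite mxE mul1r.
Qed.

Lemma grad_fpaper y :
  coord1 y != 0 -> grad (fpaper a) y = fpaper_grad (Num.sg (coord1 y)).
Proof.
rewrite -normr_gt0 coord1E => y0; apply: (@grad_near_affine _ _ _ _ 0).
near=> z; rewrite addr0 dot_fpaper_grad fpaperE -mulrA -normr_sg_close //.
rewrite coord1E; near: z.
by apply: cvgr_dist_lt y0; exact: coord_continuous.
Unshelve. all: by end_near.
Qed.

Lemma fpaper_along_e1 y h :
  fpaper a (h *: delta_mx 0 ord0 + y) = a * `|h + coord1 y| + tailsum y.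
Proof.
have e1 : coord1 (delta_mx 0 ord0 : 'rV[R]_n.+1) = 1 by rewrite coord1E mxE.
have e0 : tailsum (delta_mx 0 ord0 : 'rV[R]_n.+1) = 0.
  by rewrite tailsumE big1 // => i _; rewrite mxE.
rewrite fpaperE !linearD !linearZ /= e1 e0 scaler0 add0r.
by rewrite -[h *: 1]/(h * 1) mulr1.
Qed.

Lemma fpaper_not_differentiable y :
  a != 0 -> coord1 y = 0 -> ~ differentiable (fpaper a) y.
Proof.
move=> a0 y0 /(@diff_derivable _ _ _ _ _ (delta_mx 0 ord0)); rewrite /derivable.
suff -> : (fun h => h^-1 *:
      ((fpaper a \o shift y) (h *: delta_mx 0 ord0) - fpaper a y))
    = (fun h => a * Num.sg h).
  by move/cvg_scaled_sgr0/eqP; rewrite (negbTE a0).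
apply/funext => h /=.
rewrite fpaper_along_e1 fpaperE y0 addr0 normr0 mulr0 add0r addrK.
have [->|h0] := eqVneq h 0; first by rewrite sgr0 invr0 mulr0 scale0r.
by rewrite normrEsg [_ *: _]mulrC mulrA mulfK.
Qed.

Lemma wolfe_fpaper_sg_flip c2 x t :
  a != 0 -> c2 < 1 -> coord1 x != 0 ->
  wolfe (fpaper a) c2 x (- grad (fpaper a) x) t ->
  Num.sg (coord1 (x + t *: - grad (fpaper a) x)) = - Num.sg (coord1 x).
Proof.
move=> a0 c21 x0 [dy]; set y := x + _.
have y0 : coord1 y != 0.
  by apply/eqP => y0; exact: fpaper_not_differentiable a0 y0 dy.
rewrite !grad_fpaper // !linearN /= !dot_fpaper_grad coord1_fpaper_grad.
rewrite tailsum_fpaper_grad => curv.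
have ss := sgr_mul_self x0.
have a2 : 0 < a ^+ 2 by rewrite exprn_even_gt0 // a0 orbT.
have n_ge0 : 0 <= n%:R :> R by [].
have sg_lt1 : Num.sg (coord1 y * coord1 x) < 1.
  have aMa u v : a * u * (a * v) = a ^+ 2 * (u * v) by ring.
  by move: curv; rewrite sgrM !aMa ss mulr1 => curv; nra.
have yx_neg : coord1 y * coord1 x < 0.
  have [//|yx_pos|/eqP] := ltrgtP (coord1 y * coord1 x) 0.
    by rewrite gtr0_sg // ltxx in sg_lt1.
  by rewrite mulf_eq0 (negbTE y0) (negbTE x0).
have sgyx : Num.sg (coord1 y) * Num.sg (coord1 x) = -1.
  by rewrite -sgrM ltr0_sg.
by rewrite -[LHS]mulr1 -ss mulrA sgyx mulN1r.
Qed.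

Lemma coord1_fpaper_step x t : coord1 x != 0 ->
  let y := x + t *: - grad (fpaper a) x in
  Num.sg (coord1 y) = - Num.sg (coord1 x) -> `|coord1 y| = t * a - `|coord1 x|.
Proof.
move=> x0 y flip; rewrite normrEsg flip /y grad_fpaper //.
rewrite !linearD !linearZ linearN /=.
rewrite coord1_fpaper_grad normrEsg.
have ss := sgr_mul_self x0.
set s := Num.sg (coord1 x) in ss *.
have -> : - s * (coord1 x + t *: - (a * s)) = t * a * (s * s) - s * coord1 x.
  by rewrite -[t *: _]/(t * _); ring.
by rewrite ss mulr1.
Qed.

Lemma armijo_fpaperE c1 x t : coord1 x != 0 ->
  armijo (fpaper a) c1 x (- grad (fpaper a) x) t <->
  a * `|coord1 (x + t *: - grad (fpaper a) x)| - t * n%:R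
    <= a * `|coord1 x| - c1 * t * (a ^+ 2 + n%:R).
Proof.
move=> x0; rewrite /armijo !fpaperE grad_fpaper //.
have ss := sgr_mul_self x0.
set s := Num.sg (coord1 x) in ss *.
have step_tail : tailsum (x + t *: - fpaper_grad s) = tailsum x - t * n%:R.
  rewrite linearD linearZ linearN /= tailsum_fpaper_grad.
  by rewrite -[t *: _]/(t * _) mulrN.
have slope : dot (fpaper_grad s) (- fpaper_grad s) = - (a ^+ 2 + n%:R).
  rewrite linearN /= dot_fpaper_grad coord1_fpaper_grad tailsum_fpaper_grad.
  by rewrite mulrACA ss mulr1 expr2.
by rewrite step_tail slope; split => ?; lra.
Qed.

End Fpaper.

Theorem lemma2 (R : realType) (n : nat) (a c1 c2 : R) (xk : 'rV[R]_n) (tk : R) :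
  (2 <= n)%N ->
  Num.sqrt (n%:R - 1) <= a ->
  0 < c1 -> c1 < c2 -> c2 < 1 ->
  coord1 xk != 0 ->
  let f := fpaper a in
  let tau := c1 + (n%:R - 1) * (c1 - 1) / a ^+ 2 in
  let dk := - grad f xk in
  wolfe f c2 xk dk tk ->
  (armijo f c1 xk dk tk <-> (1 + tau) * (a * tk / 2) <= `|coord1 xk|).
Proof.
case: n xk => [//|n] xk n_gt0; rewrite -natr1 addrK.
move=> ha _ _ c21 x0 f tau dk W.
have a0 : 0 < a by apply: lt_le_trans ha; rewrite sqrtr_gt0 ltr0n.
have flip := wolfe_fpaper_sg_flip (lt0r_neq0 a0) c21 x0 W.
by rewrite armijo_fpaperE // coord1_fpaper_step // armijo_threshold.
Qed.
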